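(* Let $F$ be a positive integer, $p\ge1$, and $n_1<n_2<\cdots<n_p<F$ positive integers with $d=\gcd\{n_1,\dots,n_p\}$ satisfying $d\nmid F$. For $i\in\{1,\dots,p\}$ let $d_i=\gcd\{n_1,\dots,n_i\}$; for $j\in\{1,\dots,p-1\}$ let $k_j=\max\{k\in\mathbb{N}\mid n_j+kd_j<n_{j+1}\}$, and let $k_p=\max\{k\in\mathbb{N}\mid n_p+kd_p<F\}$. Then $\{n_1,\dots,n_p\}$ is a $\mathrm{Sat}(F)$-set and $$\mathrm{Sat}(F)[\{n_1,\dots,n_p\}]=\{0\}\cup\bigcup_{j=1}^{p}\{n_j+kd_j\mid 0\le k\le k_j\}\cup\{x\in\mathbb{N}\mid x\ge F+1\}.$$
   Context: A numerical semigroup is a subset $S\subseteq\mathbb{N}$ closed under addition, containing $0$, with $\mathbb{N}\setminus S$ finite; its Frobenius number $\mathrm{F}(S)$ is the largest integer not in $S$. For $A\subseteq\mathbb{N}$ and $a\in A$, let $\mathrm{d}_A(a)=\gcd\{x\in A\mid x\le a\}$. A numerical semigroup $S$ is saturated if $s+\mathrm{d}_S(s)\in S$ for all $s\in S\setminus\{0\}$. For a positive integer $F$, $\mathrm{Sat}(F)$ denotes the set of all saturated numerical semigroups $S$ with $\mathrm{F}(S)=F$. Let $\Delta(F+1)=\{0\}\cup\{x\in\mathbb{N}\mid x\ge F+1\}$. A set $X\subseteq\mathbb{N}$ is a $\mathrm{Sat}(F)$-set if $X\cap\Delta(F+1)=\emptyset$ and there exists $S\in\mathrm{Sat}(F)$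 with $X\subseteq S$. For a $\mathrm{Sat}(F)$-set $X$, $\mathrm{Sat}(F)[X]$ denotes the intersection of all elements of $\mathrm{Sat}(F)$ containing $X$ (the smallest element of $\mathrm{Sat}(F)$ containing $X$). *)

From mathcomp Require Import all_boot.
Set Implicit Arguments. Unset Strict Implicit. Unset Printing Implicit Defensive.

Definition numerical_semigroup (S : pred nat) : Prop :=
  S 0 /\ (forall x y, S x -> S y -> S (x + y)) /\ (exists N, forall x, N <= x -> S x).

Definition frobenius_is (S : pred nat) (F : nat) : Prop :=
  ~~ S F /\ (forall x, F < x -> S x).

Definition dA (A : pred nat) (a : nat) : nat :=
  \big[gcdn/0]_(x < a.+1 | A x) x.

Definition saturated (S : pred nat) : Prop :=
  numerical_semigroup S /\ forall s, S s -> s != 0 -> S (s + dA S s).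

Definition inSat (F : nat) (S : pred nat) : Prop :=
  saturated S /\ frobenius_is S F.

Definition Delta (m : nat) (x : nat) : Prop := x = 0 \/ m <= x.

Definition SatSet (F : nat) (X : nat -> Prop) : Prop :=
  (forall x, X x -> ~ Delta F.+1 x) /\
  exists S, inSat F S /\ forall x, X x -> S x.

Definition SatClosure (F : nat) (X : nat -> Prop) (x : nat) : Prop :=
  forall S, inSat F S -> (forall y, X y -> S y) -> S x.

From mathcomp Require Import all_boot.
From mathcomp Require Import zify.
Set Implicit Arguments. Unset Strict Implicit. Unset Printing Implicit Defensive.

(* Write d_i for the gcd of the prefix n_0, ..., n_i and
   consider the explicit set
     T = {0} U {x | F < x} U {x <> F | n_j <= x and d_j | x for some j < p}.
   (1) T belongs to Sat(F): it is closed under addition because the prefix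
       gcds form a divisibility chain; F is not in T because d_{p-1} does
       not divide F; and T is saturated because, for 0 < s < F in T, the gcd
       d_T(s) is a multiple of d_m, where m is the last index with n_m <= s.
   (2) T is contained in every saturated S containing the n_i: in such an S,
       d_S(n_j) divides d_j, and iterating saturation shows that S contains
       n_j + t for every multiple t of d_S(n_j).
   Hence Sat(F)[{n_i}] = T.  (3) Finally, an element x < F of T is written
   n_m + k d_m with m the last index such that n_m <= x, and the maximality
   of k_m bounds k, which yields the explicit description of the theorem. *)

Definition prefix_gcd (n : nat -> nat) (i : nat) : nat :=
  \big[gcdn/0]_(j < i.+1) n j.

Lemma prefix_gcd_dvd n i k : k <= i -> prefix_gcd n i %| n k.
Proof. by move=> le_ki; apply: (biggcdn_inf (Ordinal (le_ki : k < i.+1))). Qed.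

Lemma dvd_prefix_gcd n i e :
  (forall k, k <= i -> e %| n k) -> e %| prefix_gcd n i.
Proof. by move=> dvd_e; apply/dvdn_biggcdP => k _; exact/dvd_e/(ltn_ord k). Qed.

Lemma prefix_gcd_chain n i j : i <= j -> prefix_gcd n j %| prefix_gcd n i.
Proof.
by move=> le_ij; apply: dvd_prefix_gcd => k le_ki; apply/prefix_gcd_dvd/(leq_trans le_ki).
Qed.

Lemma dA_dvd (A : pred nat) x y : A x -> x <= y -> dA A y %| x.
Proof. by move=> Ax le_xy; apply: (biggcdn_inf (Ordinal (le_xy : x < y.+1))). Qed.

Lemma dvd_dA (A : pred nat) y e :
  (forall x, A x -> x <= y -> e %| x) -> e %| dA A y.
Proof. by move=> dvd_e; apply/dvdn_biggcdP => x Ax; exact/dvd_e/(ltn_ord x). Qed.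

Lemma dA_chain (A : pred nat) x y : x <= y -> dA A y %| dA A x.
Proof.
by move=> le_xy; apply: dvd_dA => z Az le_zx; apply: dA_dvd (leq_trans le_zx le_xy).
Qed.

(* Iterated saturation: a saturated semigroup containing s <> 0 contains
   s + t for every multiple t of d_S(s).  Each saturation step adds
   d_S(s), and d_S only becomes finer as s grows. *)
Lemma saturated_add_dvd S s t :
  saturated S -> S s -> s != 0 -> dA S s %| t -> S (s + t).
Proof.
move=> satS; elim/ltn_ind: t s => t IH s Ss s_neq0 dvd_t.
have [->|t_gt0] := posnP t; first by rewrite addn0.
set e := dA S s in dvd_t.
have e_gt0 : 0 < e.
  by rewrite lt0n; apply: contra s_neq0 => /eqP e0; rewrite -dvd0n -e0 dA_dvd.
have le_et : e <= t by apply: dvdn_leq.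
have Sse : S (s + e) by apply: satS.2.
have dvd_e : dA S (s + e) %| e by apply/dA_chain/leq_addr.
have := IH (t - e) _ (s + e) Sse _ _; rewrite -addnA subnKC //; apply.
- by rewrite ltn_subrL e_gt0.
- by rewrite addn_eq0 negb_and s_neq0.
- by rewrite (dvdn_trans dvd_e) // dvdn_sub.
Qed.

Section ExplicitClosure.

Variables (F p : nat) (n : nat -> nat).
Hypothesis F_gt0 : 0 < F.
Hypothesis p_gt0 : 0 < p.
Hypothesis n0_gt0 : 0 < n 0.
Hypothesis n_incr : forall i, i.+1 < p -> n i < n i.+1.
Hypothesis gcd_ndvd_F : ~~ (prefix_gcd n p.-1 %| F).

Local Notation d := (prefix_gcd n).

Lemma n_mono i j : i <= j -> j < p -> n i <= n j.
Proof.
move=> le_ij lt_jp.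
apply: (@homo_leq_in _ [pred k | k < p] n leq leqnn (fun _ _ _ => @leq_trans _ _ _))
  => //; last exact: leq_ltn_trans lt_jp.
- by move=> a b _ lt_bp k /andP[_ /ltn_trans]; apply.
- by move=> k _ /n_incr /ltnW.
Qed.

Lemma n_gt0 i : i < p -> 0 < n i.
Proof. by move=> lt_ip; apply: leq_trans n0_gt0 (n_mono (leq0n i) lt_ip). Qed.

Lemma last_index_below x j : j < p -> n j <= x ->
  exists m, [/\ m < p, j <= m, n m <= x & forall i, i < p -> n i <= x -> i <= m].
Proof.
move=> lt_jp le_njx.
have ex_i : exists i, (i < p) && (n i <= x) by exists j; rewrite lt_jp le_njx.
have bounded : forall i, (i < p) && (n i <= x) -> i <= p by move=> i /andP[/ltnW].
have [m /andP[lt_mp le_nmx] max_m] := ex_maxnP ex_i bounded.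
exists m; split=> //; first by apply: max_m; rewrite lt_jp le_njx.
by move=> i lt_ip le_nix; apply: max_m; rewrite lt_ip le_nix.
Qed.

Definition candidate (x : nat) : bool :=
  (x == 0) || (F < x) ||
  ((x != F) && [exists j : 'I_p, (n j <= x) && (d j %| x)]).

Lemma candidateP x : candidate x ->
  [\/ x = 0, F < x | x != F /\ exists j, [/\ j < p, n j <= x & d j %| x]].
Proof.
rewrite /candidate => /orP[/orP[/eqP|]|/andP[neq_xF /existsP[j /andP[le_njx dvd_x]]]].
- by constructor 1.
- by constructor 2.
- by constructor 3; split=> //; exists j.
Qed.

(* Every multiple of d_m above n_m lies in T: it cannot be F since d_{p-1}
   divides d_m but not F. *)
Lemma candidate_multiple m y : m < p -> n m <= y -> d m %| y -> candidate y.
Proof.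
move=> lt_mp le_nmy dvd_y.
have [eq_yF|neq_yF] := eqVneq y F; last first.
  by rewrite /candidate neq_yF; apply/orP; right; apply/existsP; exists (Ordinal lt_mp); rewrite le_nmy.
case/negP: gcd_ndvd_F; rewrite -eq_yF (dvdn_trans _ dvd_y) // prefix_gcd_chain //.
by rewrite -ltnS prednK.
Qed.

Lemma candidate_gen i : i < p -> candidate (n i).
Proof. by move=> lt_ip; apply: (candidate_multiple lt_ip) => //; apply: prefix_gcd_dvd. Qed.

Lemma candidate_add x y : candidate x -> candidate y -> candidate (x + y).
Proof.
have big z : F < z -> candidate z by rewrite /candidate => ->; rewrite orbT.
case/candidateP=> [->|lt_Fx|[_ [i [lt_ip le_nix dvd_x]]]] // Cy.
  by apply: big; apply: leq_trans lt_Fx (leq_addr _ _).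
case/candidateP: Cy => [->|lt_Fy|[_ [j [lt_jp le_njy dvd_y]]]].
- by rewrite addn0; apply: candidate_multiple lt_ip le_nix dvd_x.
- by apply: big; apply: leq_trans lt_Fy (leq_addl _ _).
have [le_ij|lt_ji] := leqP i j.
- apply: (candidate_multiple lt_jp); first exact: leq_trans le_njy (leq_addl _ _).
  by rewrite dvdn_add // (dvdn_trans (prefix_gcd_chain _ le_ij)).
- apply: (candidate_multiple lt_ip); first exact: leq_trans le_nix (leq_addr _ _).
  by rewrite dvdn_add // (dvdn_trans (prefix_gcd_chain _ (ltnW lt_ji))).
Qed.

(* Saturation of T: below F, the elements of T up to s are all multiples of
   d_m for the last index m with n_m <= s, hence so is d_T(s). *)
Lemma candidate_saturation s : candidate s -> s != 0 -> candidate (s + dA candidate s).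
Proof.
case/candidateP=> [->//|lt_Fs|[neq_sF [j [lt_jp le_njs dvd_s]]]] _.
  by rewrite /candidate (leq_trans lt_Fs (leq_addr _ _)) orbT.
have [lt_Fs|le_sF] := ltnP F s.
  by rewrite /candidate (leq_trans lt_Fs (leq_addr _ _)) orbT.
have lt_sF : s < F by rewrite ltn_neqAle neq_sF le_sF.
have [m [lt_mp le_jm le_nms max_m]] := last_index_below lt_jp le_njs.
apply: (candidate_multiple lt_mp); first exact: leq_trans le_nms (leq_addr _ _).
apply: dvdn_add; first exact: dvdn_trans (prefix_gcd_chain _ le_jm) dvd_s.
apply: dvd_dA => x /candidateP[->//|lt_Fx|[_ [i [lt_ip le_nix dvd_x]]]] le_xs.
  by have := leq_ltn_trans le_xs lt_sF; rewrite ltnNge ltnW.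
apply: dvdn_trans dvd_x; apply: prefix_gcd_chain; apply: max_m => //.
exact: leq_trans le_nix le_xs.
Qed.

Lemma candidate_inSat : inSat F candidate.
Proof.
split; last split.
- split; last exact: candidate_saturation.
  split=> //; split; first exact: candidate_add.
  by exists F.+1 => x lt_Fx; rewrite /candidate lt_Fx orbT.
- by rewrite /candidate ltnn eqxx /= !orbF -lt0n F_gt0.
- by move=> x lt_Fx; rewrite /candidate lt_Fx orbT.
Qed.

(* In a saturated S containing all generators, d_S(n_j) divides d_j, so S
   contains n_j + t for every multiple t of d_j. *)
Lemma saturated_contains_translates S j t :
  saturated S -> (forall i, i < p -> S (n i)) -> j < p -> d j %| t -> S (n j + t).
Proof.
move=> satS Sn lt_jp dvd_t; apply: saturated_add_dvd => //; first exact: Sn.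
  by rewrite -lt0n n_gt0.
apply: dvdn_trans dvd_t; apply: dvd_prefix_gcd => i le_ij.
by apply: dA_dvd; [apply/Sn/(leq_ltn_trans le_ij) | apply: n_mono].
Qed.

Lemma candidate_least S x :
  inSat F S -> (forall i, i < p -> S (n i)) -> candidate x -> S x.
Proof.
move=> [satS [_ S_big]] Sn /candidateP[->|/S_big//|[_ [j [lt_jp le_njx dvd_x]]]].
  by case: satS => [[]].
rewrite -(subnKC le_njx); apply: saturated_contains_translates => //.
by rewrite dvdn_sub // prefix_gcd_dvd.
Qed.

Lemma candidate_explicit (kk : nat -> nat) x :
  let nxt := fun i => if i.+1 < p then n i.+1 else F in
  (forall j k, j < p -> n j + k * d j < nxt j -> k <= kk j) ->
  candidate x <->
  (x = 0 \/ (exists j k, [/\ j < p, k <= kk j & x = n j + k * d j]) \/ F.+1 <= x).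
Proof.
move=> nxt max_kk; split; last first.
  case=> [->//|[[j [k [lt_jp _ ->]]]|lt_Fx]]; last by rewrite /candidate lt_Fx orbT.
  by apply: (candidate_multiple lt_jp (leq_addr _ _)); rewrite dvdn_add ?dvdn_mull ?prefix_gcd_dvd.
case/candidateP=> [->|lt_Fx|[neq_xF [j [lt_jp le_njx dvd_x]]]]; [by left | by right; right |].
have [lt_Fx|le_xF] := ltnP F x; first by right; right.
have lt_xF : x < F by rewrite ltn_neqAle neq_xF le_xF.
have [m [lt_mp le_jm le_nmx max_m]] := last_index_below lt_jp le_njx.
have dvd_xm : d m %| x - n m.
  by rewrite dvdn_sub ?prefix_gcd_dvd // (dvdn_trans (prefix_gcd_chain _ le_jm)).
have x_eq : x = n m + (x - n m) %/ d m * d m by rewrite divnK // subnKC.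
right; left; exists m, ((x - n m) %/ d m); split=> //.
apply: max_kk => //; rewrite -x_eq /nxt; case: ifP => // lt_m1p.
by rewrite ltnNge; apply: contraT => /negbNE /(max_m _ lt_m1p); rewrite ltnn.
Qed.

End ExplicitClosure.

Theorem lemma43 (F p : nat) (n : nat -> nat) (kk : nat -> nat) :
  0 < F -> 1 <= p ->
  0 < n 0 ->
  (forall i, i.+1 < p -> n i < n i.+1) ->
  n p.-1 < F ->
  ~~ ((\big[gcdn/0]_(j < p) n j) %| F) ->
  let dd := fun i => \big[gcdn/0]_(j < i.+1) n j in
  let nxt := fun i => if i.+1 < p then n i.+1 else F in
  (forall j, j < p ->
     n j + kk j * dd j < nxt j /\
     (forall k, n j + k * dd j < nxt j -> k <= kk j)) ->
  let X := fun x => exists2 i, i < p & x = n i in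
  SatSet F X /\
  (forall x, SatClosure F X x <->
     (x = 0 \/ (exists j k, [/\ j < p, k <= kk j & x = n j + k * dd j]) \/ F.+1 <= x)).
Proof.
move=> F_gt0 p_gt0 n0_gt0 n_incr lt_nF ndvd_F dd nxt kk_spec X.
have gcd_ndvd_F : ~~ (prefix_gcd n p.-1 %| F) by rewrite /prefix_gcd prednK.
have T_sat := candidate_inSat F_gt0 p_gt0 gcd_ndvd_F.
have T_gen := candidate_gen p_gt0 gcd_ndvd_F.
split.
  split; last by exists (candidate F p n); split=> // _ [i lt_ip ->]; apply: T_gen.
  move=> _ [i lt_ip ->] [ni0|lt_Fni].
    by have := n_gt0 n0_gt0 n_incr lt_ip; rewrite ni0.
  have le_ip : i <= p.-1 by rewrite -ltnS prednK.
  have le_nni : n i <= n p.-1 by apply: (n_mono n_incr le_ip); rewrite prednK.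
  lia.
move=> x; rewrite -(@candidate_explicit F p n p_gt0 gcd_ndvd_F kk x) => [|j k lt_jp];
  last exact: (kk_spec j lt_jp).2.
split=> [closure_x | Tx S inSat_S X_S].
  by apply: closure_x T_sat _ => _ [i lt_ip ->]; apply: T_gen.
by apply: (candidate_least n0_gt0 n_incr) Tx => // i lt_ip; apply: X_S; exists i.
Qed.
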